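(* Let $q\ge 2$ be a prime power. For every $a\in\mathbb{F}_q\cup\{q\}$ and every $c\in\mathbb{F}_q$, any two distinct vertices of $\{(a,t,c)_1: t\in\mathbb{F}_q\}$ are at distance at least $6$ in $B'_q$.
   Context: $\mathbb{F}_q$ is the field with $q$ elements; $q$ is also used as a formal symbol not in $\mathbb{F}_q$. $B_q$ is the bipartite graph with parts $\{(x,y,z)_0: x,y,z\in\mathbb{F}_q\}$ and $\{(a,b,c)_1: a,b,c\in\mathbb{F}_q\}$, in which $(a,b,c)_1$ is adjacent exactly to $(j,\,aj+b,\,a^2j+2ab+c)_0$, $j\in\mathbb{F}_q$. $B'_q$ is obtained from $B_q$ by adding $q^2$ new vertices $(q,b,c)_1$, $b,c\in\mathbb{F}_q$, to the second part, where $(q,b,c)_1$ is adjacent exactly to $(c,b,j)_0$, $j\in\mathbb{F}_q$. *)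

From HB Require Import structures.
From mathcomp Require Import all_boot all_order all_algebra all_field.
Set Implicit Arguments. Unset Strict Implicit. Unset Printing Implicit Defensive.
Import GRing.Theory.
Local Open Scope ring_scope.

(* Vertices of B'_q over a finite field F (q = #|F|, a prime power >= 2).
   Part 0: inl (x,y,z)  ~ (x,y,z)_0.
   Part 1: inr (a,b,c)  ~ (a,b,c)_1, where a : option F, with
           a = Some a' for a' in F_q and a = None for the formal symbol q. *)
Definition Bvert (F : finFieldType) : finType :=
  ((F * F * F) + (option F * F * F))%type.

Definition adj10 (F : finFieldType) (a : option F) (b c x y z : F) : bool :=
  match a with
  | Some a' => (y == a' * x + b) && (z == a' ^+ 2 * x + 2 * a' * b + c)
  | None => (x == c) && (y == b)
  end.

Definition Badj (F : finFieldType) : rel (Bvert F) :=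
  fun u v =>
    match u, v with
    | inl (x, y, z), inr (a, b, c) => adj10 a b c x y z
    | inr (a, b, c), inl (x, y, z) => adj10 a b c x y z
    | _, _ => false
    end.

Definition dist_ge (F : finFieldType) (u v : Bvert F) (d : nat) : Prop :=
  forall p : seq (Bvert F), path (@Badj F) u p -> last u p = v -> (d <= size p)%N.

From HB Require Import structures.
From mathcomp Require Import all_boot all_order all_algebra all_field.
From mathcomp Require Import ring.
Import GRing.Theory.
Local Open Scope ring_scope.

(* The vertices (a,t,c)_1, t in F, form a "parallel class" of lines of B'_q.
   The proof has three ingredients.
   - B'_q is bipartite (every edge joins part 0 to part 1), so a walk between
     two vertices of part 1 has even length; this excludes lengths 1, 3, 5.
   - Two distinct lines of a parallel class have no common neighbour
     ([parallel_lines_disjoint]); this excludes length 2 (and 0 needs t = t').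
   - Two distinct lines of a parallel class do not lie on a common 4-cycle
     with a third line ([parallel_lines_no_common_transversal]); this excludes
     length 4.  Its heart is the field identity of [two_parabolas_meet]. *)

Section Incidence.
Context {F : finFieldType}.

Lemma parallel_lines_disjoint_pt (a : option F) (t t' c x y z : F) :
  adj10 a t c x y z -> adj10 a t' c x y z -> t = t'.
Proof.
case: a => [a|] /=.
  by move=> /andP[/eqP -> _] /andP[/eqP /addrI].
by move=> /andP[_ /eqP ->] /andP[_ /eqP ->].
Qed.

(* Indeed (b-a)(t'-t) is a combination of the incidence equations. *)
Lemma two_parabolas_meet (a b t t' s c d x1 x2 : F) : a != b ->
  a * x1 + t = b * x1 + s -> a ^+ 2 * x1 + 2 * a * t + c = b ^+ 2 * x1 + 2 * b * s + d ->
  a * x2 + t' = b * x2 + s -> a ^+ 2 * x2 + 2 * a * t' + c = b ^+ 2 * x2 + 2 * b * s + d ->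
  t = t'.
Proof.
move=> nab Y1 Z1 Y2 Z2.
have key : (b - a) * (t' - t) =
    (a ^+ 2 * x1 + 2 * a * t + c - (b ^+ 2 * x1 + 2 * b * s + d))
  - (a ^+ 2 * x2 + 2 * a * t' + c - (b ^+ 2 * x2 + 2 * b * s + d))
  - (a + b) * ((a * x1 + t - (b * x1 + s)) - (a * x2 + t' - (b * x2 + s))) by ring.
move: key; rewrite Y1 Z1 Y2 Z2 !subrr mulr0 subrr => /eqP.
by rewrite mulf_eq0 subr_eq0 eq_sym (negbTE nab) /= subr_eq0 => /eqP.
Qed.

Lemma parallel_lines_no_common_transversal_pt (a b : option F)
    (t t' c s d x1 y1 z1 x2 y2 z2 : F) :
  adj10 a t c x1 y1 z1 -> adj10 b s d x1 y1 z1 ->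
  adj10 b s d x2 y2 z2 -> adj10 a t' c x2 y2 z2 -> t = t'.
Proof.
case: a => [a|]; case: b => [b|] /=.
- move=> /andP[/eqP -> /eqP ->] /andP[/eqP Y1 /eqP Z1]
         /andP[/eqP -> /eqP ->] /andP[/eqP Y2 /eqP Z2].
  have [ab|nab] := eqVneq a b; last first.
    exact: two_parabolas_meet nab Y1 Z1 (esym Y2) (esym Z2).
  by subst b; move: Y1 Y2 => /addrI -> /addrI ->.
- move=> /andP[/eqP Y1 _] /andP[/eqP X1 /eqP E1] /andP[/eqP X2 /eqP E2]
         /andP[/eqP Y2 _].
  have : a * x1 + t = a * x2 + t' by rewrite -Y1 -Y2 E1 E2.
  by rewrite X1 X2 => /addrI.
- move=> /andP[/eqP X1 /eqP Y1] /andP[/eqP E1 _] /andP[/eqP E2 _]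
         /andP[/eqP X2 /eqP Y2].
  by rewrite -Y1 -Y2 E1 E2 X1 X2.
- move=> /andP[_ /eqP Y1] /andP[_ /eqP E1] /andP[_ /eqP E2] /andP[_ /eqP Y2].
  by rewrite -Y1 -Y2 E1 E2.
Qed.

Definition part1 (v : Bvert F) : bool := if v is inr _ then true else false.

Lemma Badj_part (u v : Bvert F) : Badj u v -> part1 u != part1 v.
Proof. by case: u => [[[? ?] ?]|[[? ?] ?]]; case: v => [[[? ?] ?]|[[? ?] ?]]. Qed.

Lemma path_part {u : Bvert F} {p : seq (Bvert F)} :
  path (@Badj F) u p -> part1 (last u p) = part1 u (+) odd (size p).
Proof.
elim: p u => [|v p IHp] u /=; first by rewrite addbF.
move=> /andP[/Badj_part uv /IHp ->].
by move: uv; case: (part1 u); case: (part1 v); case: (odd (size p)).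
Qed.

Lemma parallel_lines_disjoint {a : option F} {t t' c : F} {v : Bvert F} :
  Badj (inr (a, t, c)) v -> Badj v (inr (a, t', c)) -> t = t'.
Proof.
case: v => [[[x y] z]|//]; exact: parallel_lines_disjoint_pt.
Qed.

Lemma parallel_lines_no_common_transversal {a : option F} {t t' c : F}
    {v1 v2 v3 : Bvert F} :
  Badj (inr (a, t, c)) v1 -> Badj v1 v2 -> Badj v2 v3 ->
  Badj v3 (inr (a, t', c)) -> t = t'.
Proof.
case: v1 => [[[x1 y1] z1]|//]; case: v2 => [//|[[b s] d]].
case: v3 => [[[x2 y2] z2]|//].
exact: parallel_lines_no_common_transversal_pt.
Qed.

End Incidence.

Theorem claim4 (F : finFieldType) (a : option F) (c t t' : F) :
  t != t' ->
  dist_ge (inr (a, t, c) : Bvert F) (inr (a, t', c)) 6.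
Proof.
move=> tt' p walk endp.
have even_p : ~~ odd (size p).
  by have := path_part walk; rewrite endp /= => <-.
have neq_t (e : t = t') : False by rewrite e eqxx in tt'.
case: p walk endp even_p => [|v1 [|v2 [|v3 [|v4 [|v5 [|v6 p]]]]]] //=.
- by move=> _ [e]; case: (neq_t e).
- move=> /and3P[e1 e2 _] end2; subst v2.
  by case: (neq_t (parallel_lines_disjoint e1 e2)).
- move=> /and5P[e1 e2 e3 e4 _] end4; subst v4.
  by case: (neq_t (parallel_lines_no_common_transversal e1 e2 e3 e4)).
Qed.
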